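(* Let $(S, +)$ be a commutative semigroup, let $p$ be an idempotent in $(\beta S, +)$, and let $\langle C_n \rangle_{n=1}^\infty$ be a sequence of members of $p$. Then for each $i \in \mathbb{N}$ there exists a sequence $\langle x_{i, j}\rangle_{j=1}^\infty$ in $S$ with $\mathrm{FS}(\langle x_{i, j}\rangle_{j=1}^\infty) \subseteq C_i$, such that for every nonempty finite $F \subseteq \mathbb{N}$, $\sum_{i \in F} \langle x_{i, j}\rangle_{j=1}^\infty \subseteq C_{\min F}$, i.e. $\sum_{i\in F} x_{i,j_i} \in C_{\min F}$ for every choice of $j_i\in\mathbb{N}$ ($i\in F$).
   Context: $\beta S$ is the set of ultrafilters on the discrete semigroup $S$, with the extension of the operation $p+q = \{A \subseteq S : \{x \in S: -x+A \in q\} \in p\}$, where $-x+A=\{y\in S: x+y\in A\}$; $p$ is idempotent if $p+p=p$. For a sequence $\langle x_n\rangle_{n=1}^\infty$, $\mathrm{FS}(\langle x_n\rangle_{n=1}^\infty)=\{\sum_{n\in H}x_n : H \text{ a nonempty finite subset of } \mathbb{N}\}$. For finite $F\subseteq\mathbb{N}$ and sequences $Y_i$, $\sum_{i\in F} Y_i$ is the set of sums $\sum_{i\in F} a_i$ where $a_i$ is a term of $Y_i$. *)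

From mathcomp Require Import all_boot.
Set Implicit Arguments. Unset Strict Implicit. Unset Printing Implicit Defensive.

Definition is_ultrafilter (S : Type) (p : (S -> Prop) -> Prop) : Prop :=
  [/\ p (fun _ => True),
      ~ p (fun _ => False),
      (forall A B : S -> Prop, p A -> (forall x, A x -> B x) -> p B),
      (forall A B : S -> Prop, p A -> p B -> p (fun x => A x /\ B x))
    & (forall A : S -> Prop, p A \/ p (fun x => ~ A x))].

Definition left_translate (S : Type) (op : S -> S -> S) (x : S) (A : S -> Prop)
  : S -> Prop := fun y => A (op x y).

Definition ultra_add (S : Type) (op : S -> S -> S) (p q : (S -> Prop) -> Prop)
  : (S -> Prop) -> Prop :=
  fun A => p (fun x => q (left_translate op x A)).

Definition ultra_idempotent (S : Type) (op : S -> S -> S) (p : (S -> Prop) -> Prop)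
  : Prop := forall A : S -> Prop, ultra_add op p p A <-> p A.

Definition nelist_sum (S : Type) (op : S -> S -> S) (x : nat -> S) (h : nat) (t : seq nat) : S :=
  foldl (fun acc i => op acc (x i)) (x h) t.

(* FS(<x_n>) : sums over nonempty finite index sets H, represented as
   duplicate-free nonempty lists (the order is irrelevant as op is
   associative and commutative). *)
Definition FS (S : Type) (op : S -> S -> S) (x : nat -> S) : S -> Prop :=
  fun y => exists (h : nat) (t : seq nat), uniq (h :: t) /\ y = nelist_sum op x h t.

From mathcomp Require Import all_boot zify.
From Stdlib Require Import Classical ClassicalEpsilon.
Set Implicit Arguments. Unset Strict Implicit. Unset Printing Implicit Defensive.

(* For an idempotent ultrafilter p and A in p, the set
   A* = {x in A : -x + A in p} is again in p and -x + A* is in p for every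
   x in A*.  Iterating this, choose y_n in B_n and put
   B_(n+1) = (B_n /\ -y_n + B_n /\ C_0 /\ ... /\ C_(n+1))*.  Then every sum of
   distinct y_n with least index k lies in B_k, hence in C_k.  The double
   sequence x_(i,j) = y_(2^i (2j+1)) only uses indices >= i and distinct
   pairs (i, j) give distinct indices, so both required properties follow. *)

Definition pair_code (i j : nat) : nat := 2 ^ i * j.*2.+1.

Lemma logn2_pair_code i j : logn 2 (pair_code i j) = i.
Proof.
rewrite /pair_code lognM ?expn_gt0 // pfactorK //.
rewrite -[j.*2.+1]muln1 logn_Gauss ?logn1 ?addn0 //.
by rewrite coprime_sym coprimen2 /= odd_double.
Qed.

Lemma pair_code_inj i j i' j' :
  pair_code i j = pair_code i' j' -> i = i' /\ j = j'.
Proof.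
move=> e; have ei : i = i' by rewrite -(logn2_pair_code i j) e logn2_pair_code.
subst i'; split=> //; move/eqP: e.
by rewrite /pair_code eqn_pmul2l ?expn_gt0 //; lia.
Qed.

Lemma leq_pair_code i j : i <= pair_code i j.
Proof.
apply: leq_trans (ltnW (ltn_expl i (isT : 1 < 2))) _.
by rewrite leq_pmulr.
Qed.

Lemma nelist_sum_oAC (S : Type) (op : S -> S -> S)
    (opA : associative op) (opC : commutative op) (F : nat -> S) h t :
  Some (nelist_sum op F h t) = \big[oAC opA opC/None]_(i <- h :: t) Some (F i).
Proof.
rewrite big_cons /nelist_sum.
elim: t (F h) => [|a t IH] acc; first by rewrite big_nil.
by rewrite /= IH big_cons Monoid.mulmA.
Qed.

Section Ultrafilter.

Variables (S : Type) (p : (S -> Prop) -> Prop).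
Hypothesis p_ultra : is_ultrafilter p.

Lemma ultrafilter_superset {A B : S -> Prop} :
  p A -> (forall x, A x -> B x) -> p B.
Proof. by have [_ _ sup _ _] := p_ultra; apply: sup. Qed.

Lemma ultrafilter_meet {A B : S -> Prop} : p A -> p B -> p (fun x => A x /\ B x).
Proof. by have [_ _ _ meet _] := p_ultra; apply: meet. Qed.

Lemma ultrafilter_witness {A : S -> Prop} : p A -> exists x, A x.
Proof.
move=> pA; apply: NNPP => noA; have [_ p_empty _ _ _] := p_ultra.
apply: p_empty; apply: (ultrafilter_superset pA) => x Ax.
by apply: noA; exists x.
Qed.

Lemma ultrafilter_inhabited : inhabited S.
Proof.
have [pT _ _ _ _] := p_ultra.
by have [x _] := ultrafilter_witness pT; exists.
Qed.

Definition meet_upto (C : nat -> S -> Prop) (k : nat) : S -> Prop :=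
  fun z => forall i, i <= k -> C i z.

Lemma meet_upto_in (C : nat -> S -> Prop) :
  (forall n, p (C n)) -> forall k, p (meet_upto C k).
Proof.
move=> C_in_p; elim=> [|k IH].
  apply: (ultrafilter_superset (C_in_p 0)) => z Cz i.
  by rewrite leqn0 => /eqP ->.
apply: (ultrafilter_superset (ultrafilter_meet IH (C_in_p k.+1))) => z [Dz Cz].
move=> i.
by rewrite leq_eqVlt ltnS => /orP [/eqP -> //|]; apply: Dz.
Qed.

Variable op : S -> S -> S.
Hypothesis opA : associative op.
Hypothesis p_idem : ultra_idempotent op p.

Definition star (A : S -> Prop) : S -> Prop :=
  fun x => A x /\ p (left_translate op x A).

Lemma star_in {A : S -> Prop} : p A -> p (star A).
Proof. by move=> pA; apply: (ultrafilter_meet pA); apply/p_idem. Qed.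

Lemma star_translate_in {A : S -> Prop} {x : S} :
  star A x -> p (left_translate op x (star A)).
Proof.
move=> [_ px]; apply: (ultrafilter_superset (star_in px)) => z [Axz pz].
split=> //; apply: (ultrafilter_superset pz) => w.
by rewrite /left_translate opA.
Qed.

Variable C : nat -> S -> Prop.
Hypothesis C_in_p : forall n, p (C n).

(* [chain n] is B_n, and [pick n] below is the chosen y_n. *)
Fixpoint chain (n : nat) : S -> Prop :=
  let y m := epsilon ultrafilter_inhabited (chain m) in
  star (match n with
        | 0 => meet_upto C 0
        | m.+1 => fun z =>
            [/\ chain m z, left_translate op (y m) (chain m) z & meet_upto C n z]
        end).

Definition pick (n : nat) : S := epsilon ultrafilter_inhabited (chain n).

Lemma chain_translate_in {n : nat} {x : S} :
  chain n x -> p (left_translate op x (chain n)).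
Proof. by case: n => [|n]; apply: star_translate_in. Qed.

Lemma chain_in n : p (chain n).
Proof.
elim: n => [|n IH]; first exact/star_in/meet_upto_in.
have pick_n : chain n (pick n).
  by apply: epsilon_spec; apply: ultrafilter_witness.
apply: star_in; apply: (ultrafilter_superset
  (ultrafilter_meet IH (ultrafilter_meet (chain_translate_in pick_n)
                                         (meet_upto_in C_in_p n.+1)))).
by move=> z [? [? ?]].
Qed.

Lemma chain_pick n : chain n (pick n).
Proof. by apply: epsilon_spec; apply: ultrafilter_witness; apply: chain_in. Qed.

Lemma chain_succ {n : nat} {z : S} :
  chain n.+1 z -> chain n z /\ chain n (op (pick n) z).
Proof. by case=> [[]]. Qed.

Lemma chain_meet_upto {n : nat} {z : S} : chain n z -> meet_upto C n z.
Proof. by case: n => [[]|n [[]]]. Qed.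

Lemma chain_decr {k n : nat} {z : S} : k <= n -> chain n z -> chain k z.
Proof.
elim: n z => [|n IH] z; first by rewrite leqn0 => /eqP ->.
rewrite leq_eqVlt ltnS => /orP [/eqP -> //|kn] /chain_succ [+ _].
exact: IH.
Qed.

Hypothesis opC : commutative op.

Lemma chain_sum_sorted {a : nat} {L : seq nat} {k : nat} :
  k <= a -> path ltn a L ->
  exists2 z, \big[oAC opA opC/None]_(i <- a :: L) Some (pick i) = Some z
           & chain k z.
Proof.
elim: L a k => [|b L IH] a k ka /=.
  rewrite big_seq1 => _; exists (pick a) => //.
  exact: chain_decr ka (chain_pick a).
case/andP=> ab bL; have [z sum_z chain_z] := IH b a.+1 ab bL.
rewrite big_cons sum_z; exists (op (pick a) z) => //.
exact: chain_decr ka (chain_succ chain_z).2.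
Qed.

Lemma nelist_sum_pick_in k (g : nat -> nat) h t :
  injective g -> uniq (h :: t) -> (forall i, i \in h :: t -> k <= g i) ->
  C k (nelist_sum op (fun i => pick (g i)) h t).
Proof.
move=> g_inj uniq_ht k_le.
have := nelist_sum_oAC opA opC (fun i => pick (g i)) h t.
rewrite -(big_map g xpredT (fun n => Some (pick n))).
rewrite -(perm_big _ (permEl (perm_sort leq _))).
have sorted_L : sorted ltn (sort leq (map g (h :: t))).
  by rewrite ltn_sorted_uniq_leq sort_uniq map_inj_uniq // uniq_ht
             (sort_sorted leq_total).
have mem_L := mem_sort leq (map g (h :: t)).
case: (sort leq _) sorted_L mem_L => [|a L] sorted_L mem_L.
  by have := mem_L (g h); rewrite map_f ?mem_head.
have k_a : k <= a.
  have /mapP [i ht_i ->] : a \in map g (h :: t) by rewrite -mem_L mem_head.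
  exact: k_le.
have [z -> chain_z] := chain_sum_sorted k_a sorted_L.
by case=> ->; apply: (chain_meet_upto chain_z).
Qed.

End Ultrafilter.

Theorem theorem2p5 (S : Type) (op : S -> S -> S)
  (opA : forall a b c : S, op a (op b c) = op (op a b) c)
  (opC : forall a b : S, op a b = op b a)
  (p : (S -> Prop) -> Prop)
  (p_ultra : is_ultrafilter p)
  (p_idem : ultra_idempotent op p)
  (C : nat -> (S -> Prop))
  (C_in_p : forall n, p (C n)) :
  exists x : nat -> nat -> S,
    (forall i y, FS op (x i) y -> C i y) /\
    (forall (h : nat) (t : seq nat), uniq (h :: t) ->
       forall m : nat, m \in h :: t -> (forall k, k \in h :: t -> m <= k) ->
       forall j : nat -> nat,
         C m (nelist_sum op (fun i => x i (j i)) h t)).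
Proof.
have sum_pick_in := nelist_sum_pick_in p_ultra opA p_idem C_in_p opC.
exists (fun i j => pick p_ultra op C (pair_code i j)); split.
  move=> i _ [h [t [uniq_ht ->]]].
  apply: sum_pick_in uniq_ht _ => [a b /pair_code_inj [] //|a _].
  exact: leq_pair_code.
move=> h t uniq_ht m _ m_le j.
apply: sum_pick_in uniq_ht _ => [a b /pair_code_inj [] //|a ht_a].
exact: leq_trans (m_le a ht_a) (leq_pair_code a (j a)).
Qed.
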